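(* Let $\langle S\mid R\rangle\cong\mathbb{Z}^n$ be a 3-presentation, and suppose $g^ah^b$ represents the identity in $\langle S\mid R\rangle$, where $g,h\in S$ are distinct and $a,b$ are nonzero, relatively prime integers. Let $i$ be a new generator not in $S$, let $S'=(S\cup\{i\})\setminus\{g,h\}$, and let $R'$ be obtained from $R$ by replacing every occurrence of $g$ by $i^{b}$ and every occurrence of $h$ by $i^{-a}$ in each relation. Then $\langle S'\mid R'\rangle$ is a 3-presentation and $\langle S'\mid R'\rangle\cong\mathbb{Z}^n$.
   Context: A 3-presentation of a group $G$ is a group presentation $\langle S\mid R\rangle\cong G$ (with $S,R$ finite) in which each relation in $R$ is either the empty word, or $g^a$, or $g^ah^b$, or $g^ah^bi^c$, where $g,h,i\in S$ (not necessarily distinct) and $a,b,c\in\mathbb{Z}$ (after substitution, a product such as $(i^b)^{a'}(i^{-a})^{b'}$ is read as a single power of $i$). *)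

From HB Require Import structures.
From mathcomp Require Import all_boot all_order all_algebra.
From Stdlib Require Import Relations.
Set Implicit Arguments. Unset Strict Implicit. Unset Printing Implicit Defensive.
Import Order.TTheory GRing.Theory Num.Theory.
Local Open Scope ring_scope.

(* A word over generators S: a sequence of syllables s^k, k : int. *)
Definition word (S : Type) := seq (S * int).

(* One-step moves generating the congruence defining <S | R> = F(S)/<<R>>:
   deleting a trivial syllable, merging adjacent syllables of the same
   generator (together these give free reduction), deleting a relator. *)
Inductive pres_step (S : eqType) (R : seq (word S)) : word S -> word S -> Prop :=
| ps_zero (u v : word S) (s : S) : pres_step R (u ++ (s, 0%R) :: v) (u ++ v)
| ps_merge (u v : word S) (s : S) (m k : int) :
    pres_step R (u ++ (s, m) :: (s, k) :: v) (u ++ (s, m + k) :: v)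
| ps_rel (u v r : word S) : r \in R -> pres_step R (u ++ r ++ v) (u ++ v).

Definition pres_eq (S : eqType) (R : seq (word S)) : relation (word S) :=
  clos_refl_sym_trans _ (pres_step R).

Definition three_pres (S : finType) (R : seq (word S)) : Prop :=
  all (fun r : word S => size r <= 3)%N R.

Definition eval_Zn (S : Type) (n : nat) (f : S -> 'rV[int]_n) (w : word S) : 'rV[int]_n :=
  \sum_(p <- w) (f p.1 *~ p.2).

(* <S | R> is isomorphic to Z^n: there is a homomorphism F(S) -> Z^n
   (determined by the images of the generators) inducing a bijection
   (hence a group isomorphism) from F(S)/<<R>> onto Z^n. *)
Definition pres_iso_Zn (S : finType) (R : seq (word S)) (n : nat) : Prop :=
  exists f : S -> 'rV[int]_n,
    (forall v : 'rV[int]_n, exists w : word S, eval_Zn f w = v) /\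
    (forall w1 w2 : word S, eval_Zn f w1 = eval_Zn f w2 <-> pres_eq R w1 w2).

(* New generator set S' = (S u {i}) \ {g, h}, with i = None. *)
Definition newgen (S : finType) (g h : S) : finType :=
  {x : option S | (x != Some g) && (x != Some h)}.

Definition inew (S : finType) (g h : S) : newgen g h := exist _ None isT.

Definition subst_syll (S : finType) (g h : S) (a b : int) (p : S * int)
  : newgen g h * int :=
  (insubd (inew g h) (Some p.1),
   if p.1 == g then b * p.2 else if p.1 == h then - a * p.2 else p.2).

Definition subst_rels (S : finType) (g h : S) (a b : int) (R : seq (word S))
  : seq (word (newgen g h)) :=
  map (fun r => map (subst_syll g h a b) r) R.

From mathcomp Require Import all_boot all_order all_algebra.
From mathcomp Require Import ring.
From Stdlib Require Import Relations.
Import GRing.Theory.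
Local Open Scope ring_scope.
Set Implicit Arguments. Unset Strict Implicit. Unset Printing Implicit Defensive.

(* Write x = f g, y = f h for the images in Z^n of g and h under
   an isomorphism f : <S | R> ~ Z^n.  The relation g^a h^b = 1 gives
   a x + b y = 0, and a Bezout identity u a + v b = 1 makes t = v x - u y
   satisfy b t = x and -a t = y; so sending the new generator i to t and the
   other generators of S' to their old images defines f' on words over S'.
   The substitution  phi : g |-> i^b, h |-> i^-a  maps words over S to words
   over S' and respects the presentations, and the back-substitution
   psi : i |-> g^v h^-u  is inverse to it up to the relations of R'
   (i^(bv) i^(au) = i).  Since f' o phi = f and f o psi = f', the general
   transfer lemma [pres_iso_transfer] turns the isomorphism for <S | R> into
   one for <S' | R'>. *)

Section Congruence.
Variables (S : eqType) (R : seq (word S)).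

Lemma pres_step_ctx (x y u v : word S) :
  pres_step R x y -> pres_step R (u ++ x ++ v) (u ++ y ++ v).
Proof.
case=> [u' v' s|u' v' s m k|u' v' r Hr].
- by have := ps_zero R (u ++ u') (v' ++ v) s; rewrite -!catA.
- by have := ps_merge R (u ++ u') (v' ++ v) s m k; rewrite -!catA.
- by have := ps_rel (u ++ u') (v' ++ v) Hr; rewrite -!catA.
Qed.

Lemma pres_eq_ctx (x y u v : word S) :
  pres_eq R x y -> pres_eq R (u ++ x ++ v) (u ++ y ++ v).
Proof.
elim=> [x1 y1 H|x1|x1 y1 _ IH|x1 y1 z1 _ IH1 _ IH2].
- by apply: rst_step; apply: pres_step_ctx.
- exact: rst_refl.
- exact: rst_sym.
- exact: rst_trans IH1 IH2.
Qed.

Lemma pres_eq_cat (x y x' y' : word S) :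
  pres_eq R x y -> pres_eq R x' y' -> pres_eq R (x ++ x') (y ++ y').
Proof.
move=> Hxy Hxy'; apply: rst_trans (_ : pres_eq R (y ++ x') _).
  by have := pres_eq_ctx [::] x' Hxy.
by have := pres_eq_ctx y [::] Hxy'; rewrite !cats0.
Qed.

Lemma pres_eq_relator (r : word S) : r \in R -> pres_eq R r [::].
Proof. by move=> Hr; apply: rst_step; have := ps_rel [::] [::] Hr; rewrite cats0. Qed.

End Congruence.

Section Evaluation.
Variables (S : Type) (n : nat) (f : S -> 'rV[int]_n).

Lemma eval_nil : eval_Zn f [::] = 0.
Proof. by rewrite /eval_Zn big_nil. Qed.

Lemma eval_cons (p : S * int) (w : word S) :
  eval_Zn f (p :: w) = f p.1 *~ p.2 + eval_Zn f w.
Proof. by rewrite /eval_Zn big_cons. Qed.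

Lemma eval_cat (w1 w2 : word S) :
  eval_Zn f (w1 ++ w2) = eval_Zn f w1 + eval_Zn f w2.
Proof. by rewrite /eval_Zn big_cat. Qed.

End Evaluation.

Lemma eval_pres_eq (S : eqType) (n : nat) (f : S -> 'rV[int]_n)
    (R : seq (word S)) (x y : word S) :
  (forall r, r \in R -> eval_Zn f r = 0) ->
  pres_eq R x y -> eval_Zn f x = eval_Zn f y.
Proof.
move=> HR; elim=> [x1 y1 H|x1|x1 y1 _ IH|x1 y1 z1 _ IH1 _ IH2] //; last first.
  by rewrite IH1.
case: H => [u v s|u v s m k|u v r Hr]; rewrite !eval_cat ?eval_cons //=.
- by rewrite mulr0z add0r.
- by congr (_ + _); rewrite addrA -mulrzDr.
- by rewrite (HR r Hr) add0r.
Qed.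

Lemma pres_iso_transfer (S S' : finType) (R : seq (word S)) (n : nat)
    (f : S -> 'rV[int]_n) (f' : S' -> 'rV[int]_n)
    (phi : word S -> word S') (psi : word S' -> word S) :
  (forall v, exists w, eval_Zn f w = v) ->
  (forall w1 w2, eval_Zn f w1 = eval_Zn f w2 <-> pres_eq R w1 w2) ->
  (forall w1 w2, pres_eq R w1 w2 -> pres_eq (map phi R) (phi w1) (phi w2)) ->
  (forall w, pres_eq (map phi R) w (phi (psi w))) ->
  (forall w, eval_Zn f' (phi w) = eval_Zn f w) ->
  (forall w, eval_Zn f (psi w) = eval_Zn f' w) ->
  pres_iso_Zn (map phi R) n.
Proof.
move=> f_onto f_iso phi_eq phi_psi f'_phi f_psi; exists f'; split.
  by move=> v; have [w <-] := f_onto v; exists (phi w).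
have rel0 r : r \in R -> eval_Zn f r = 0.
  by move=> Hr; rewrite -(eval_nil f); apply/f_iso/pres_eq_relator.
move=> w1 w2; split=> [E|]; last first.
  by apply: eval_pres_eq => _ /mapP [r Hr ->]; rewrite f'_phi rel0.
apply: rst_trans (phi_psi w1) _; apply: rst_trans (rst_sym _ _ _ _ (phi_psi w2)).
by apply/phi_eq/f_iso; rewrite !f_psi.
Qed.

Lemma bezout_common_root (V : zmodType) (x y : V) (a b u v : int) :
  x *~ a + y *~ b = 0 -> u * a + v * b = 1 ->
  (x *~ v - y *~ u) *~ b = x /\ (x *~ v - y *~ u) *~ (- a) = y.
Proof.
move=> hxy huv.
have hy : y *~ b = - (x *~ a) by apply/eqP; rewrite -addr_eq0 addrC hxy.
have hx : x *~ a = - (y *~ b) by apply/eqP; rewrite -addr_eq0 hxy.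
split.
  rewrite mulrzBl -!mulrzA (mulrC u b) (mulrzA y b u) hy mulNrz -mulrzA.
  by rewrite opprK -mulrzDr -[RHS]mulr1z -huv; congr (_ *~ _); ring.
rewrite mulrzBl -!mulrzA (mulrC v (-a)) mulNr mulrNz (mulrzA x a v) hx.
rewrite mulNrz opprK mulrN mulrNz opprK -mulrzA -mulrzDr.
by rewrite -[RHS]mulr1z -huv; congr (_ *~ _); ring.
Qed.

Section Substitution.
Variables (S : finType) (g h : S) (a b : int).
Hypothesis g_neq_h : g != h.

Local Notation S' := (newgen g h).
Local Notation phi := (map (subst_syll g h a b)).

(* The generator of S' replacing s: i for s = g or h, s itself otherwise. *)
Definition new_of (s : S) : S' := insubd (inew g h) (Some s).

Definition subst_coef (s : S) : int :=
  if s == g then b else if s == h then - a else 1.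

Lemma subst_syllE (s : S) (k : int) :
  subst_syll g h a b (s, k) = (new_of s, subst_coef s * k).
Proof. by rewrite /subst_syll /subst_coef /=; do 2!case: eqP => //; rewrite mul1r. Qed.

Lemma val_new_of (s : S) :
  val (new_of s) = if (s == g) || (s == h) then None else Some s.
Proof. by rewrite val_insubd /= !(inj_eq Some_inj); case: (s == g); case: (s == h). Qed.

Lemma new_of_gh : new_of g = inew g h /\ new_of h = inew g h.
Proof. by split; apply: val_inj; rewrite val_new_of eqxx ?orbT. Qed.

Lemma val_newgen_neq (x : S') (s : S) :
  val x = Some s -> (s == g) = false /\ (s == h) = false.
Proof.
by move=> xs; have := valP x; rewrite xs !(inj_eq Some_inj) => /andP [/negbTE ? /negbTE ?].
Qed.

Lemma new_of_val (x : S') (s : S) : val x = Some s -> new_of s = x.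
Proof.
move=> xs; apply: val_inj; rewrite val_new_of xs.
by have [-> ->] := val_newgen_neq xs.
Qed.

Lemma subst_pres_eq (R : seq (word S)) (x y : word S) :
  pres_eq R x y -> pres_eq (subst_rels g h a b R) (phi x) (phi y).
Proof.
elim=> [x1 y1 H|x1|x1 y1 _ IH|x1 y1 z1 _ IH1 _ IH2]; last first.
- exact: rst_trans IH1 IH2.
- exact: rst_sym.
- exact: rst_refl.
apply: rst_step; case: H => [u v s|u v s m k|u v r Hr]; rewrite !map_cat /=.
- by rewrite subst_syllE mulr0; apply: ps_zero.
- by rewrite !subst_syllE mulrDr; apply: ps_merge.
- by apply: ps_rel; apply: map_f.
Qed.

Lemma three_pres_subst (R : seq (word S)) :
  three_pres R -> three_pres (subst_rels g h a b R).
Proof. by rewrite /three_pres all_map; apply: sub_all => r /=; rewrite size_map. Qed.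

Variables (u v : int).
Hypothesis bezout : u * a + v * b = 1.

Definition back_syll (p : S' * int) : word S :=
  if val p.1 is Some s then [:: (s, p.2)] else [:: (g, v * p.2); (h, - u * p.2)].

Definition back_word (w : word S') : word S := flatten (map back_syll w).

(* Each syllable of S' is R'-equal to the substitution of its
   back-substitution; for i this is i^(bv) i^(au) = i. *)
Lemma subst_back_syll (R' : seq (word S')) (p : S' * int) :
  pres_eq R' [:: p] (phi (back_syll p)).
Proof.
case: p => x k; rewrite /back_syll /=; case Ex: (val x) => [s|] /=.
  have [sg sh] := val_newgen_neq Ex.
  rewrite subst_syllE (new_of_val Ex) /subst_coef sg sh mul1r.
  exact: rst_refl.
have ->: x = inew g h by apply: val_inj; rewrite Ex.
rewrite !subst_syllE; case: new_of_gh => -> ->.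
rewrite /subst_coef eqxx eq_sym (negbTE g_neq_h) eqxx.
have {1}->: k = b * (v * k) + - a * (- u * k).
  by rewrite -[LHS]mul1r -bezout; ring.
by apply: rst_sym; apply: rst_step; apply: (ps_merge _ [::] [::]).
Qed.

Lemma subst_back_word (R' : seq (word S')) (w : word S') :
  pres_eq R' w (phi (back_word w)).
Proof.
elim: w => [|p w IH]; first exact: rst_refl.
by rewrite /back_word /= map_cat -cat1s; apply: pres_eq_cat => //; apply: subst_back_syll.
Qed.

Variables (n : nat) (f : S -> 'rV[int]_n).

Definition new_value : 'rV[int]_n := f g *~ v - f h *~ u.

Definition lift_eval (x : S') : 'rV[int]_n :=
  if val x is Some s then f s else new_value.

Lemma eval_back_word (w : word S') :
  eval_Zn f (back_word w) = eval_Zn lift_eval w.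
Proof.
elim: w => [|[x k] w IH]; first by rewrite !eval_nil.
rewrite /back_word /= eval_cat -/(back_word w) IH eval_cons /back_syll /lift_eval /=.
case: (val x) => [s|] /=; first by rewrite eval_cons eval_nil addr0.
rewrite !eval_cons eval_nil addr0 /new_value mulrzBl !mulrzA.
by rewrite mulNr mulrNz mulNrz.
Qed.

Hypothesis gh_trivial : f g *~ a + f h *~ b = 0.

Lemma eval_subst (w : word S) : eval_Zn lift_eval (phi w) = eval_Zn f w.
Proof.
have [tb ta] := bezout_common_root gh_trivial bezout.
elim: w => [|[s k] w IH]; first by rewrite !eval_nil.
rewrite /= !eval_cons IH subst_syllE; congr (_ + _).
rewrite /lift_eval val_new_of /subst_coef /new_value.
have [->|_] := eqVneq s g; first by rewrite /= mulrzA tb.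
have [->|_] := eqVneq s h; first by rewrite /= mulrzA ta.
by rewrite /= mul1r.
Qed.

End Substitution.

Theorem mainTheorem10 (S : finType) (R : seq (word S)) (n : nat)
  (g h : S) (a b : int) :
  three_pres R -> pres_iso_Zn R n ->
  g != h -> a != 0 -> b != 0 -> coprimez a b ->
  pres_eq R [:: (g, a); (h, b)] [::] ->
  three_pres (subst_rels g h a b R) /\ pres_iso_Zn (subst_rels g h a b R) n.
Proof.
move=> R3 [f [f_onto f_iso]] g_neq_h _ _ cop ab_trivial.
split; first exact: three_pres_subst.
have [[u v] /= bezout] := coprimezP _ _ cop.
have gh_trivial : f g *~ a + f h *~ b = 0.
  by have := (f_iso _ _).2 ab_trivial; rewrite !eval_cons eval_nil addr0.
apply: (pres_iso_transfer (f' := lift_eval u v f) (psi := back_word u v)) => //.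
- exact: subst_pres_eq.
- exact: subst_back_word.
- exact: eval_subst.
- exact: eval_back_word.
Qed.
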